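(* Let $\mathcal T$ be $\Lambda$-admissible. For all $E\in\mathcal T$, $$\sum_{\boldsymbol x\in\mathcal H_E}d^2(v,\boldsymbol x)\lesssim|v-\mathcal I_Ev|^2_{1,E}\lesssim\sum_{\boldsymbol x\in\mathcal H_E}d^2(v,\boldsymbol x)\qquad\forall v\in\mathbb V_E,$$ with hidden constants depending only on $\Lambda$ (and on $\mathcal T_0$, $c_s$, $C_s$), not on $E$ or $\mathcal T$.
   Context: Setting. $\Omega\subset\mathbb R^2$ polygonal, $\mathcal T_0$ a fixed conforming triangulation; $\mathcal T$ is obtained by finitely many newest-vertex bisections (possibly with hanging nodes). Nodes are vertices of triangles of $\mathcal T$; a hanging node $\boldsymbol z$ was created as the midpoint of an edge of a triangle of an earlier partition, whose endpoints are denoted $\boldsymbol z',\boldsymbol z''$. Global index: $0$ at proper nodes (vertices of all triangles containing them), $\max(\lambda(\boldsymbol z'),\lambda(\boldsymbol z''))+1$ at hanging nodes; $\Lambda$-admissible means all indices $\le\Lambda$. For $E\in\mathcal T$: $\mathcal N_E$ = nodes on $\partial E$, $\mathcal V_E$ = the three vertices of $E$, $\mathcal H_E=\mathcal N_E\setminus\mathcal V_E$. $\mathbb V_E\subset C^0(\overline E)\cap H^1(E)$: dimension $|\mathcal N_E|$, contains $\mathbb P_1(E)$, traces exactly the continuous functions on $\partial E$ affine between consecutive nodes of $\mathcal N_E$. Stability assumption: with $s_E(v,w)=\sum_{\boldsymbol x\in\mathcal N_E}v(\boldsymbol x)w(\boldsymbol x)$, $c_s|w|^2_{1,E}\le s_E(w,w)\le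 C_s|w|^2_{1,E}$ for all $w\in\mathbb V_E$ vanishing at $\mathcal V_E$. $\mathcal I_E$: Lagrange interpolation into $\mathbb P_1(E)$ at $\mathcal V_E$. Hierarchical details: $d(v,\boldsymbol z)=v(\boldsymbol z)$ for $\boldsymbol z\in\mathcal V_E$, and $d(v,\boldsymbol z)=v(\boldsymbol z)-\frac12(v(\boldsymbol z')+v(\boldsymbol z''))$ for $\boldsymbol z\in\mathcal H_E$. *)

From HB Require Import structures.
From mathcomp Require Import all_boot all_order all_algebra.
From mathcomp Require Import all_classical all_reals all_analysis.
Set Implicit Arguments. Unset Strict Implicit. Unset Printing Implicit Defensive.
Import Order.TTheory GRing.Theory Num.Theory.
Import numFieldNormedType.Exports.
Local Open Scope classical_set_scope.
Local Open Scope ring_scope.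

Section Mesh.
Variable R : realType.

Definition pt2 := (R * R)%type.

(* A labelled triangle (z0, a, b): z0 is the newest vertex, [a,b] the
   refinement edge (the edge opposite the newest vertex). *)
Definition tri := (pt2 * pt2 * pt2)%type.

Definition newest (K : tri) : pt2 := K.1.1.
Definition redge1 (K : tri) : pt2 := K.1.2.
Definition redge2 (K : tri) : pt2 := K.2.
Definition vertices (K : tri) : seq pt2 := [:: newest K; redge1 K; redge2 K].

Definition midpoint (a b : pt2) : pt2 := ((a.1 + b.1) / 2, (a.2 + b.2) / 2).

Definition comb3 (l1 l2 l3 : R) (p q r : pt2) : pt2 :=
  (l1 * p.1 + l2 * q.1 + l3 * r.1, l1 * p.2 + l2 * q.2 + l3 * r.2).

Definition closedT (K : tri) : set pt2 :=
  [set x | exists l1 l2 l3 : R, [/\ 0 <= l1, 0 <= l2, 0 <= l3, l1 + l2 + l3 = 1 &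
     x = comb3 l1 l2 l3 (newest K) (redge1 K) (redge2 K)]].

Definition openT (K : tri) : set pt2 :=
  [set x | exists l1 l2 l3 : R, [/\ 0 < l1, 0 < l2, 0 < l3, l1 + l2 + l3 = 1 &
     x = comb3 l1 l2 l3 (newest K) (redge1 K) (redge2 K)]].

Definition bdT (K : tri) : set pt2 := closedT K `\` openT K.

Definition det2 (u v : pt2) : R := u.1 * v.2 - u.2 * v.1.
Definition psub (u v : pt2) : pt2 := (u.1 - v.1, u.2 - v.2).

Definition nondegenerate (K : tri) : Prop :=
  det2 (psub (redge1 K) (newest K)) (psub (redge2 K) (newest K)) != 0.

Definition segment (a b : pt2) : set pt2 :=
  [set x | exists t : R, [/\ 0 <= t, t <= 1 & x = comb3 (1 - t) t 0 a b b]].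
Definition osegment (a b : pt2) : set pt2 :=
  [set x | exists t : R, [/\ 0 < t, t < 1 & x = comb3 (1 - t) t 0 a b b]].

Definition conv (s : seq pt2) : set pt2 :=
  [set x | exists l : pt2 -> R, [/\ (forall p, p \in s -> 0 <= l p),
     \sum_(p <- undup s) l p = 1 &
     x = (\sum_(p <- undup s) l p * p.1, \sum_(p <- undup s) l p * p.2)]].

Definition conforming (T : seq tri) : Prop :=
  [/\ uniq T, (forall K, K \in T -> nondegenerate K) &
      forall K K', K \in T -> K' \in T -> K != K' ->
        openT K `&` openT K' = set0 /\
        closedT K `&` closedT K' = conv [seq p <- vertices K | p \in vertices K']].

(* newest-vertex bisection of K = (z0, a, b): m = midpoint of [a,b] becomes the
   newest vertex of both children, whose refinement edges are [z0,a], [z0,b]. *)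
Definition children (K : tri) : seq tri :=
  let m := midpoint (redge1 K) (redge2 K) in
  [:: (m, newest K, redge1 K); (m, newest K, redge2 K)].

Definition bisect (T : seq tri) (K : tri) : seq tri := children K ++ rem K T.

Inductive refines (T1 : seq tri) : seq tri -> Prop :=
  | refines0 : refines T1 T1
  | refinesS T K : refines T1 T -> K \in T -> refines T1 (bisect T K).

Definition nodes (T : seq tri) : seq pt2 := undup (flatten (map vertices T)).

Definition proper_node (T : seq tri) (z : pt2) : Prop :=
  forall K, K \in T -> closedT K z -> z \in vertices K.

Definition parent_pair (T0 T : seq tri) (z z' z'' : pt2) : Prop :=
  exists T' K, [/\ refines T0 T', K \in T', refines (bisect T' K) T &
    [/\ z' = redge1 K, z'' = redge2 K & z = midpoint z' z'']].

Definition parents (T0 T : seq tri) (z : pt2) : pt2 * pt2 :=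
  match pselect (exists pr : pt2 * pt2, parent_pair T0 T z pr.1 pr.2) with
  | left H => projT1 (cid H)
  | right _ => (z, z)
  end.

(* global index: idx_le T0 T z n  <->  lambda(z) <= n, where lambda(z) = 0 at
   proper nodes and lambda(z) = max(lambda(z'), lambda(z'')) + 1 at hanging
   nodes with parents z', z''. *)
Inductive idx_le (T0 T : seq tri) : pt2 -> nat -> Prop :=
  | idx_proper z n : proper_node T z -> idx_le T0 T z n
  | idx_hanging z n : ~ proper_node T z ->
      idx_le T0 T (parents T0 T z).1 n -> idx_le T0 T (parents T0 T z).2 n ->
      idx_le T0 T z n.+1.

Definition admissible (Lambda : nat) (T0 T : seq tri) : Prop :=
  forall z, z \in nodes T -> idx_le T0 T z Lambda.

Definition NE (T : seq tri) (E : tri) : seq pt2 :=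
  [seq x <- nodes T | `[< bdT E x >]].
Definition HE (T : seq tri) (E : tri) : seq pt2 :=
  [seq x <- NE T E | x \notin vertices E].

Definition detail (T0 T : seq tri) (E : tri) (v : pt2 -> R) (z : pt2) : R :=
  if z \in vertices E then v z
  else v z - (v (parents T0 T z).1 + v (parents T0 T z).2) / 2.

Definition interpP1 (E : tri) (v : pt2 -> R) : pt2 -> R :=
  fun x =>
    let a := newest E in let b := redge1 E in let c := redge2 E in
    let D := det2 (psub b a) (psub c a) in
    let lb := det2 (psub x a) (psub c a) / D in
    let lc := det2 (psub b a) (psub x a) / D in
    (1 - lb - lc) * v a + lb * v b + lc * v c.

Definition affine (f : pt2 -> R) : Prop :=
  exists a b c : R, forall x, f x = a + b * x.1 + c * x.2.

Definition consecutive (T : seq tri) (E : tri) (x y : pt2) : Prop :=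
  [/\ x \in NE T E, y \in NE T E, x != y,
      exists a b, [/\ a \in vertices E, b \in vertices E,
                      segment a b x & segment a b y] &
      forall z, z \in NE T E -> ~ osegment x y z].

Definition pw_affine_bd (T : seq tri) (E : tri) (g : pt2 -> R) : Prop :=
  {within bdT E, continuous g} /\
  forall x y, consecutive T E x y -> forall t : R, 0 <= t -> t <= 1 ->
    g (comb3 (1 - t) t 0 x y y) = (1 - t) * g x + t * g y.

Definition leb2 := ((@lebesgue_measure R) \x (@lebesgue_measure R))%E.

Definition d1 (f : pt2 -> R) (p : pt2) : R := derive1 (fun t => f (t, p.2)) p.1.
Definition d2 (f : pt2 -> R) (p : pt2) : R := derive1 (fun t => f (p.1, t)) p.2.

Definition test_fun (U : set pt2) (phi : pt2 -> R) : Prop :=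
  [/\ continuous phi,
      (forall p : pt2, derivable (fun t => phi (t, p.2)) p.1 1 /\
                         derivable (fun t => phi (p.1, t)) p.2 1),
      continuous (d1 phi), continuous (d2 phi) &
      exists C : set pt2, [/\ compact C, C `<=` U & forall p, ~ C p -> phi p = 0]].

Definition weak_grad (E : tri) (v g1 g2 : pt2 -> R) : Prop :=
  [/\ measurable_fun (openT E) g1, measurable_fun (openT E) g2,
      leb2.-integrable (openT E) (fun x => (g1 x ^+ 2)%:E),
      leb2.-integrable (openT E) (fun x => (g2 x ^+ 2)%:E) &
      forall phi, test_fun (openT E) phi ->
        Rintegral leb2 (openT E) (fun x => v x * d1 phi x) =
          - Rintegral leb2 (openT E) (fun x => g1 x * phi x) /\
        Rintegral leb2 (openT E) (fun x => v x * d2 phi x) =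
          - Rintegral leb2 (openT E) (fun x => g2 x * phi x)].

Definition in_H1 (E : tri) (v : pt2 -> R) : Prop :=
  measurable_fun (openT E) v /\
  leb2.-integrable (openT E) (fun x => (v x ^+ 2)%:E) /\
  exists g1 g2, weak_grad E v g1 g2.

Definition H1_semi2 (E : tri) (v : pt2 -> R) (r : R) : Prop :=
  exists g1 g2, weak_grad E v g1 g2 /\
    r = Rintegral leb2 (openT E) (fun x => g1 x ^+ 2 + g2 x ^+ 2).

(* the local space V_E (functions compared on \overline{E}) *)
Definition local_space (T : seq tri) (E : tri) (VE : (pt2 -> R) -> Prop) : Prop :=
  [/\
      [/\ VE (fun _ => 0),
          (forall u w, VE u -> VE w -> VE (fun x => u x + w x)) &
          (forall (c : R) u, VE u -> VE (fun x => c * u x))],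
      (exists b : 'I_(size (NE T E)) -> pt2 -> R,
         [/\ forall i, VE (b i),
             forall v, VE v -> exists c : 'I_(size (NE T E)) -> R,
               forall x, closedT E x -> v x = \sum_i c i * b i x &
             forall c : 'I_(size (NE T E)) -> R,
               (forall x, closedT E x -> \sum_i c i * b i x = 0) ->
               forall i, c i = 0]),
      (forall v, VE v -> {within closedT E, continuous v} /\ in_H1 E v),
      (forall f, affine f -> VE f) &
      ((forall v, VE v -> pw_affine_bd T E v) /\
       (forall g, pw_affine_bd T E g ->
          exists v, VE v /\ forall x, bdT E x -> v x = g x))].

Definition stable (T : seq tri) (E : tri) (VE : (pt2 -> R) -> Prop)
  (cs Cs : R) : Prop :=
  forall w, VE w -> (forall z, z \in vertices E -> w z = 0) ->
    forall r, H1_semi2 E w r ->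
      cs * r <= \sum_(x <- NE T E) w x ^+ 2 /\
      \sum_(x <- NE T E) w x ^+ 2 <= Cs * r.

End Mesh.

From Pilot Require Import Defs.
From HB Require Import structures.
From mathcomp Require Import all_boot all_order all_algebra.
From mathcomp Require Import all_classical all_reals all_analysis.
From mathcomp Require Import ring lra zify.
Import Order.TTheory GRing.Theory Num.Theory.
Local Open Scope ring_scope.
Set Implicit Arguments. Unset Strict Implicit. Unset Printing Implicit Defensive.

(* Write w := v - I_E v; it lies in V_E and vanishes at the vertices of E, so by
   stability |w|_{1,E}^2 is equivalent to the sum of w^2 over H_E.  As I_E v is affine
   and a hanging node x is the midpoint of its parents x', x'', the detail is
   d(v, x) = w(x) - (w(x') + w(x''))/2.  The parents of a node of H_E are vertices of E
   or again in H_E: bisection keeps the invariant that overlapping edges of all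
   triangles ever created are dyadic pieces of a common segment, which forces
   [x', x''] into the edge of E through x.  Hence d^2 <= 4 sum w^2 directly, while
   unrolling the two-scale relation along the at most Lambda levels of the index gives
   w(x)^2 <= 4^Lambda sum d^2.  Finally the barycentric coordinates of these nodes are
   multiples of 2^-Lambda, so |H_E| <= (2^Lambda + 1)^2. *)

Section Barycentric.
Local Open Scope classical_set_scope.
Variable R : realType.
Implicit Types (K F : tri R) (p q : pt2 R) (g : pt2 R -> R).

Definition tri_det K := det2 (psub (redge1 K) (newest K)) (psub (redge2 K) (newest K)).

Definition bary1 K p := det2 (psub p (newest K)) (psub (redge2 K) (newest K)) / tri_det K.
Definition bary2 K p := det2 (psub (redge1 K) (newest K)) (psub p (newest K)) / tri_det K.
Definition bary0 K p := 1 - bary1 K p - bary2 K p.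

Definition lerp p q (t : R) : pt2 R := (p.1 + t * (q.1 - p.1), p.2 + t * (q.2 - p.2)).

Definition centroid K : pt2 R := comb3 (1/3) (1/3) (1/3) (newest K) (redge1 K) (redge2 K).

Definition subtri K F := forall q, q \in vertices K -> Defs.closedT F q.

Lemma lerp0 p q : lerp p q 0 = p.
Proof. by rewrite /lerp !mul0r !addr0 -surjective_pairing. Qed.

Lemma lerp1 p q : lerp p q 1 = q.
Proof. by rewrite /lerp [RHS]surjective_pairing; congr (_, _); ring. Qed.

Lemma midpoint_lerp p q : midpoint p q = lerp p q (1/2).
Proof. by rewrite /midpoint /lerp; congr (_, _); field. Qed.

Lemma midpointC p q : midpoint p q = midpoint q p.
Proof. by rewrite /midpoint addrC [_ + q.2]addrC. Qed.

Lemma comb3_bary K p : Defs.nondegenerate K ->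
  comb3 (bary0 K p) (bary1 K p) (bary2 K p) (newest K) (redge1 K) (redge2 K) = p.
Proof.
rewrite /Defs.nondegenerate /bary0 /bary1 /bary2 /tri_det /comb3 /det2 /psub.
case: p => p1 p2; case: K => [[[z1 z2] [a1 a2]] [b1 b2]] /= hD.
by congr (_, _); field.
Qed.

Lemma bary_affine K : [/\ affine (bary0 K), affine (bary1 K) & affine (bary2 K)].
Proof.
have h1 : affine (bary1 K).
  rewrite /bary1 /det2 /psub; set D := tri_det K.
  exists ((- (newest K).1 * ((redge2 K).2 - (newest K).2)
           + (newest K).2 * ((redge2 K).1 - (newest K).1)) / D).
  exists (((redge2 K).2 - (newest K).2) / D), (- ((redge2 K).1 - (newest K).1) / D).
  by move=> x /=; ring.
have h2 : affine (bary2 K).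
  rewrite /bary2 /det2 /psub; set D := tri_det K.
  exists ((- ((redge1 K).1 - (newest K).1) * (newest K).2
           + ((redge1 K).2 - (newest K).2) * (newest K).1) / D).
  exists (- ((redge1 K).2 - (newest K).2) / D), (((redge1 K).1 - (newest K).1) / D).
  by move=> x /=; ring.
split=> //; have [a1 [b1 [c1 e1]]] := h1; have [a2 [b2 [c2 e2]]] := h2.
by exists (1 - a1 - a2), (- b1 - b2), (- c1 - c2) => x; rewrite /bary0 e1 e2; ring.
Qed.

Lemma affine_lerp g p q t : affine g -> g (lerp p q t) = (1 - t) * g p + t * g q.
Proof. by case=> a [b [c h]]; rewrite !h /lerp /=; ring. Qed.

Lemma affine_comb3 g l0 l1 l2 p q r : affine g -> l0 + l1 + l2 = 1 ->
  g (comb3 l0 l1 l2 p q r) = l0 * g p + l1 * g q + l2 * g r.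
Proof.
case=> a [b [c h]] hl; rewrite !h /comb3 /=.
have -> : l0 = 1 - l1 - l2 by rewrite -hl; ring.
ring.
Qed.

Lemma affine_midpoint g p q : affine g -> g (midpoint p q) = (g p + g q) / 2.
Proof. by case=> a [b [c h]]; rewrite !h /midpoint /=; field. Qed.

Lemma affine_conv g (s : seq (pt2 R)) (l : pt2 R -> R) : affine g ->
  \sum_(q <- s) l q = 1 ->
  g (\sum_(q <- s) l q * q.1, \sum_(q <- s) l q * q.2) = \sum_(q <- s) l q * g q.
Proof.
case=> a [b [c h]] hl; rewrite h /=.
under [RHS]eq_bigr => q _ do rewrite h mulrDr mulrDr.
rewrite !big_split /= -!mulr_suml hl mul1r !mulr_sumr.
by congr (_ + _ + _); apply: eq_bigr => q _; ring.
Qed.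

Lemma bary_vertices K : Defs.nondegenerate K ->
  [/\ [/\ bary0 K (newest K) = 1, bary1 K (newest K) = 0 & bary2 K (newest K) = 0],
      [/\ bary0 K (redge1 K) = 0, bary1 K (redge1 K) = 1 & bary2 K (redge1 K) = 0] &
      [/\ bary0 K (redge2 K) = 0, bary1 K (redge2 K) = 0 & bary2 K (redge2 K) = 1]].
Proof.
rewrite /Defs.nondegenerate /bary0 /bary1 /bary2 /tri_det /det2 /psub.
by case: K => [[[z1 z2] [a1 a2]] [b1 b2]] /= hD; split; split; field.
Qed.

Lemma bary_comb3 K l0 l1 l2 : Defs.nondegenerate K -> l0 + l1 + l2 = 1 ->
  let p := comb3 l0 l1 l2 (newest K) (redge1 K) (redge2 K) in
  [/\ bary0 K p = l0, bary1 K p = l1 & bary2 K p = l2].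
Proof.
move=> hD hl /=; have [[h1 h2 h3] [h4 h5 h6] [h7 h8 h9]] := bary_vertices hD.
have [a0 a1 a2] := bary_affine K.
by rewrite !affine_comb3 // h1 h2 h3 h4 h5 h6 h7 h8 h9; split; ring.
Qed.

Lemma closedT_bary K p : Defs.nondegenerate K ->
  Defs.closedT K p <-> [/\ 0 <= bary0 K p, 0 <= bary1 K p & 0 <= bary2 K p].
Proof.
move=> hD; split=> [[l0 [l1 [l2 [h0 h1 h2 hs ->]]]]|[h0 h1 h2]].
  by have [-> -> ->] := bary_comb3 hD hs.
exists (bary0 K p), (bary1 K p), (bary2 K p); split => //; last by rewrite comb3_bary.
by rewrite /bary0; ring.
Qed.

Lemma openT_bary K p : Defs.nondegenerate K ->
  Defs.openT K p <-> [/\ 0 < bary0 K p, 0 < bary1 K p & 0 < bary2 K p].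
Proof.
move=> hD; split=> [[l0 [l1 [l2 [h0 h1 h2 hs ->]]]]|[h0 h1 h2]].
  by have [-> -> ->] := bary_comb3 hD hs.
exists (bary0 K p), (bary1 K p), (bary2 K p); split => //; last by rewrite comb3_bary.
by rewrite /bary0; ring.
Qed.

Lemma bary_centroid K : Defs.nondegenerate K ->
  [/\ bary0 K (centroid K) = 1/3, bary1 K (centroid K) = 1/3 & bary2 K (centroid K) = 1/3].
Proof. by move=> hD; apply: bary_comb3 => //; field. Qed.

Lemma centroid_openT K : Defs.nondegenerate K -> Defs.openT K (centroid K).
Proof. by move=> hD; apply/(openT_bary _ hD); have [-> -> ->] := bary_centroid hD; split; lra. Qed.

Lemma vertex_closedT K q : q \in vertices K -> Defs.closedT K q.
Proof.
rewrite !inE => /or3P [] /eqP ->; [exists 1, 0, 0|exists 0, 1, 0|exists 0, 0, 1];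
  (split; rewrite ?lexx ?ler01 //; first ring);
  by rewrite /comb3 [LHS]surjective_pairing; congr (_, _); ring.
Qed.

Lemma affine_zeros_collinear g q1 q2 k0 k1 k2 : affine g -> g q1 != g q2 ->
  g k0 = 0 -> g k1 = 0 -> g k2 = 0 -> det2 (psub k1 k0) (psub k2 k0) = 0.
Proof.
case=> a [b [c h]]; rewrite !h => hne e0 e1 e2.
rewrite /det2 /psub /=.
have u1 : b * (k1.1 - k0.1) = - (c * (k1.2 - k0.2)) by lra.
have u2 : b * (k2.1 - k0.1) = - (c * (k2.2 - k0.2)) by lra.
set dd := (_ - _ * _).
have hb : b * dd = 0.
  have -> : b * dd = (b * (k1.1 - k0.1)) * (k2.2 - k0.2)
                     - (k1.2 - k0.2) * (b * (k2.1 - k0.1)) by rewrite /dd; ring.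
  by rewrite u1 u2; ring.
have hc : c * dd = 0.
  have -> : c * dd = (k1.1 - k0.1) * (c * (k2.2 - k0.2))
                     - (c * (k1.2 - k0.2)) * (k2.1 - k0.1) by rewrite /dd; ring.
  by rewrite -[c * (k2.2 - k0.2)]opprK -[c * (k1.2 - k0.2)]opprK -u1 -u2; ring.
have : (b != 0) || (c != 0).
  apply: contraNT hne; rewrite negb_or !negbK => /andP [/eqP -> /eqP ->].
  by rewrite !mul0r !addr0.
by case/orP => hz; [move: hb|move: hc]; move/eqP; rewrite mulf_eq0 (negbTE hz) => /eqP.
Qed.

Lemma affine_gt0_openT K g p : Defs.nondegenerate K -> affine g ->
  (exists q1 q2, g q1 != g q2) ->
  0 <= g (newest K) -> 0 <= g (redge1 K) -> 0 <= g (redge2 K) ->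
  Defs.openT K p -> 0 < g p.
Proof.
move=> hD ha [q1 [q2 hq]] g0 g1 g2 [l0 [l1 [l2 [h0 h1 h2 hs ->]]]].
rewrite affine_comb3 //.
have [e0|n0] := eqVneq (g (newest K)) 0; last first.
  have : 0 < g (newest K) by rewrite lt_def n0 g0.
  by move=> hp; have := mulr_gt0 h0 hp; have := mulr_ge0 (ltW h1) g1;
    have := mulr_ge0 (ltW h2) g2; lra.
have [e1|n1] := eqVneq (g (redge1 K)) 0; last first.
  have : 0 < g (redge1 K) by rewrite lt_def n1 g1.
  by move=> hp; have := mulr_gt0 h1 hp; have := mulr_ge0 (ltW h0) g0;
    have := mulr_ge0 (ltW h2) g2; lra.
have [e2|n2] := eqVneq (g (redge2 K)) 0; last first.
  have : 0 < g (redge2 K) by rewrite lt_def n2 g2.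
  by move=> hp; have := mulr_gt0 h2 hp; have := mulr_ge0 (ltW h1) g1;
    have := mulr_ge0 (ltW h0) g0; lra.
by have := affine_zeros_collinear ha hq e0 e1 e2; move/eqP: hD.
Qed.

Lemma subtri_openT K F : Defs.nondegenerate K -> Defs.nondegenerate F -> subtri K F ->
  Defs.openT K `<=` Defs.openT F.
Proof.
move=> hK hF hs p hp; apply/(openT_bary _ hF).
have [[h1 h2 h3] [h4 h5 h6] [h7 h8 h9]] := bary_vertices hF.
have /(closedT_bary _ hF) [a0 a1 a2] := hs _ (mem_head _ _).
have /(closedT_bary _ hF) [b0 b1 b2] : Defs.closedT F (redge1 K).
  by apply: hs; rewrite !inE eqxx orbT.
have /(closedT_bary _ hF) [c0 c1 c2] : Defs.closedT F (redge2 K).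
  by apply: hs; rewrite !inE eqxx !orbT.
have [x0 x1 x2] := bary_affine F.
split; apply: (affine_gt0_openT hK) => //.
- by exists (newest F), (redge1 F); rewrite h1 h4 oner_neq0.
- by exists (redge1 F), (newest F); rewrite h5 h2 oner_neq0.
- by exists (redge2 F), (newest F); rewrite h9 h3 oner_neq0.
Qed.

Lemma subtri_closedT K F : Defs.nondegenerate F -> subtri K F -> Defs.closedT K `<=` Defs.closedT F.
Proof.
move=> hF hs p [l0 [l1 [l2 [h0 h1 h2 hl ->]]]].
have /(closedT_bary _ hF) [a0 a1 a2] := hs _ (mem_head _ _).
have /(closedT_bary _ hF) [b0 b1 b2] : Defs.closedT F (redge1 K).
  by apply: hs; rewrite !inE eqxx orbT.
have /(closedT_bary _ hF) [c0 c1 c2] : Defs.closedT F (redge2 K).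
  by apply: hs; rewrite !inE eqxx !orbT.
have [x0 x1 x2] := bary_affine F.
apply/(closedT_bary _ hF); rewrite !affine_comb3 //; split;
  by apply: addr_ge0; [apply: addr_ge0|]; apply: mulr_ge0.
Qed.

Lemma subtri_refl K : subtri K K.
Proof. by move=> q; apply: vertex_closedT. Qed.

Lemma subtri_trans K F G : Defs.nondegenerate G -> subtri K F -> subtri F G -> subtri K G.
Proof. by move=> hG h1 h2 q hq; apply: (subtri_closedT hG h2); exact: h1. Qed.

Lemma convex_comb_gt0 (x y : R) : 0 < x ->
  exists2 e0, 0 < e0 & forall e, 0 <= e -> e <= e0 -> 0 < (1 - e) * x + e * y.
Proof.
move=> hx; have hd : 0 < 2 * (`|y| + x) by have := normr_ge0 y; lra.
exists (x / (2 * (`|y| + x))); first by rewrite divr_gt0.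
move=> e he0; rewrite ler_pdivlMr // => he.
have : - y <= `|y| by rewrite -normrN ler_norm.
nra.
Qed.

(* Push p slightly towards the centroid of F. *)
Lemma openT_closedT_meet K F p : Defs.nondegenerate K -> Defs.nondegenerate F ->
  Defs.closedT F p -> Defs.openT K p -> exists q, Defs.openT F q /\ Defs.openT K q.
Proof.
move=> hK hF /(closedT_bary _ hF) [f0 f1 f2] /(openT_bary _ hK) [k0 k1 k2].
set c := centroid F.
have [e0 he0 h0] := convex_comb_gt0 (bary0 K c) k0.
have [e1 he1 h1] := convex_comb_gt0 (bary1 K c) k1.
have [e2 he2 h2] := convex_comb_gt0 (bary2 K c) k2.
pose e := Num.min (1/2 : R) (Num.min e0 (Num.min e1 e2)).
have he : 0 < e by rewrite /e !lt_min he0 he1 he2 !andbT; lra.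
have he' : e <= 1/2 by rewrite /e ge_min lexx.
exists (lerp p c e); split.
  apply/(openT_bary _ hF); have [a0 a1 a2] := bary_affine F.
  have [c0 c1 c2] := bary_centroid hF.
  by rewrite !affine_lerp // c0 c1 c2; split; nra.
apply/(openT_bary _ hK); have [a0 a1 a2] := bary_affine K.
rewrite !affine_lerp //; split; [apply: h0|apply: h1|apply: h2];
  by rewrite ?(ltW he) // /e !ge_min lexx !orbT.
Qed.

End Barycentric.

Section Edges.
Local Open Scope classical_set_scope.
Variable R : realType.
Implicit Types (K E : tri R) (p q u x : pt2 R) (e : pt2 R * pt2 R).

Definition edges K : seq (pt2 R * pt2 R) :=
  [:: (newest K, redge1 K); (newest K, redge2 K); (redge1 K, redge2 K)].

Definition cseg e x := exists t, [/\ 0 <= t, t <= 1 & x = lerp e.1 e.2 t].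
Definition oseg e x := exists t, [/\ 0 < t, t < 1 & x = lerp e.1 e.2 t].

Definition bary_at K u :=
  if u == newest K then bary0 K else if u == redge1 K then bary1 K else bary2 K.

Lemma oseg_cseg e : oseg e `<=` cseg e.
Proof. by move=> x [t [t0 t1 ->]]; exists t; split => //; apply: ltW. Qed.

Lemma lerp_oseg p q t : 0 <= t <= 1 -> lerp p q t != p -> lerp p q t != q ->
  oseg (p, q) (lerp p q t).
Proof.
case/andP=> t0 t1 hp hq; exists t; split => //.
  by rewrite lt_def t0 andbT; apply: contraNneq hp => ->; rewrite lerp0.
by rewrite lt_def t1 andbT eq_sym; apply: contraNneq hq => ->; rewrite lerp1.
Qed.

Lemma edge_vertices K e : e \in edges K -> e.1 \in vertices K /\ e.2 \in vertices K.
Proof. by rewrite !inE => /or3P [] /eqP ->; split; rewrite /= ?inE ?eqxx ?orbT. Qed.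

Lemma vertices_neq K : Defs.nondegenerate K ->
  [/\ newest K != redge1 K, newest K != redge2 K & redge1 K != redge2 K].
Proof.
rewrite /Defs.nondegenerate /det2 /psub => hD; split; apply/eqP => he; move: hD; rewrite he.
- by rewrite !subrr !mul0r subrr eqxx.
- by rewrite !subrr !mulr0 subrr eqxx.
- by rewrite mulrC subrr eqxx.
Qed.

Lemma edge_neq K e : Defs.nondegenerate K -> e \in edges K -> e.1 != e.2.
Proof.
by move=> /vertices_neq [d1 d2 d3]; rewrite !inE => /or3P [] /eqP ->.
Qed.

Lemma edge_closedT K e : e \in edges K -> cseg e `<=` Defs.closedT K.
Proof.
rewrite !inE => he _ [t [t0 t1 ->]].
case/or3P: he => /eqP -> /=; [exists (1 - t), t, 0|exists (1 - t), 0, t|exists 0, (1 - t), t];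
  by split; [lra|lra|lra|lra|rewrite /lerp /comb3; congr (_, _); ring].
Qed.

Lemma edge_oseg_not_openT K e x : Defs.nondegenerate K -> e \in edges K -> oseg e x ->
  ~ Defs.openT K x.
Proof.
move=> hD; rewrite !inE => he [t [t0 t1 ->]] /(openT_bary _ hD) [s0 s1 s2].
have [[_ h2 h3] [h4 _ h6] [h7 h8 _]] := bary_vertices hD.
have [a0 a1 a2] := bary_affine K.
case/or3P: he => /eqP ?; subst e.
- by move: s2; rewrite affine_lerp // h3 h6 !mulr0 addr0 ltxx.
- by move: s1; rewrite affine_lerp // h2 h8 !mulr0 addr0 ltxx.
- by move: s0; rewrite affine_lerp // h4 h7 !mulr0 addr0 ltxx.
Qed.

Lemma bdT_oseg_edge E x : Defs.nondegenerate E -> bdT E x -> x \notin vertices E ->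
  exists2 e, e \in edges E & oseg e x.
Proof.
move=> hD [/(closedT_bary _ hD) [c0 c1 c2] /(openT_bary _ hD) hno].
rewrite !inE !negb_or => /and3P [n0 n1 n2].
have hx := esym (comb3_bary x hD).
have hs : bary0 E x + bary1 E x + bary2 E x = 1 by rewrite /bary0; ring.
move: c0 c1 c2 hx hs hno; move: (bary0 E x) (bary1 E x) (bary2 E x).
move=> b0 b1 b2 c0 c1 c2 hx hs hno.
have [e0|p0] := eqVneq b0 0.
  exists (redge1 E, redge2 E); first by rewrite !inE !eqxx ?orbT.
  have {}hx : x = lerp (redge1 E) (redge2 E) b2.
    by rewrite hx e0 (_ : b1 = 1 - b2) /comb3 /lerp; [congr (_, _); ring|lra].
  by rewrite hx; apply: lerp_oseg; rewrite -?hx // c2; lra.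
have [e1|p1] := eqVneq b1 0.
  exists (newest E, redge2 E); first by rewrite !inE !eqxx ?orbT.
  have {}hx : x = lerp (newest E) (redge2 E) b2.
    by rewrite hx e1 (_ : b0 = 1 - b2) /comb3 /lerp; [congr (_, _); ring|lra].
  by rewrite hx; apply: lerp_oseg; rewrite -?hx // c2; lra.
have [e2|p2] := eqVneq b2 0.
  exists (newest E, redge1 E); first by rewrite !inE !eqxx ?orbT.
  have {}hx : x = lerp (newest E) (redge1 E) b1.
    by rewrite hx e2 (_ : b0 = 1 - b1) /comb3 /lerp; [congr (_, _); ring|lra].
  by rewrite hx; apply: lerp_oseg; rewrite -?hx // c1; lra.
by case: hno; split; rewrite lt_def ?p0 ?p1 ?p2.
Qed.

Lemma bary_at_affine K u : affine (bary_at K u).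
Proof.
have [a0 a1 a2] := bary_affine K.
by rewrite /bary_at; case: eqP => _ //; case: eqP.
Qed.

Lemma bary_at_vertex K u w : Defs.nondegenerate K -> u \in vertices K -> w \in vertices K ->
  bary_at K u w = (u == w)%:R.
Proof.
move=> hD; have [d1 d2 d3] := vertices_neq hD.
have [[h1 h2 h3] [h4 h5 h6] [h7 h8 h9]] := bary_vertices hD.
rewrite /bary_at !inE => /or3P [/eqP->|/eqP->|/eqP->] /or3P [/eqP->|/eqP->|/eqP->];
  by rewrite ?eqxx ?(negbTE d1) ?(negbTE d2) ?(negbTE d3) ?(eq_sym (redge1 K))
    ?(eq_sym (redge2 K)) ?(negbTE d1) ?(negbTE d2) ?(negbTE d3).
Qed.

Lemma oseg_bary_at_gt0 K u1 u2 u x : Defs.nondegenerate K ->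
  u1 \in vertices K -> u2 \in vertices K -> u1 != u2 -> oseg (u1, u2) x ->
  u \in vertices K -> (0 < bary_at K u x) = (u == u1) || (u == u2).
Proof.
move=> hD h1 h2 hne [t [t0 t1 ->]] hu /=.
rewrite affine_lerp; last exact: bary_at_affine.
rewrite !bary_at_vertex //.
have [->|n1] := eqVneq u u1; first by rewrite (negbTE hne) /= ?mulr1n ?mulr0n; apply/idP; lra.
have [_|n2] := eqVneq u u2; first by rewrite /= ?mulr1n ?mulr0n; apply/idP; lra.
by rewrite !mulr0n !mulr0 addr0 ltxx.
Qed.

Lemma oseg_vertices_eq K u1 u2 u3 u4 x : Defs.nondegenerate K ->
  u1 \in vertices K -> u2 \in vertices K -> u3 \in vertices K -> u4 \in vertices K ->
  u1 != u2 -> u3 != u4 -> oseg (u1, u2) x -> oseg (u3, u4) x ->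
  (u3, u4) = (u1, u2) \/ (u3, u4) = (u2, u1).
Proof.
move=> hD h1 h2 h3 h4 n12 n34 r12 r34.
have e3 : (u3 == u1) || (u3 == u2).
  by rewrite -(oseg_bary_at_gt0 hD h1 h2 n12 r12 h3) (oseg_bary_at_gt0 hD h3 h4 n34 r34 h3) eqxx.
have e4 : (u4 == u1) || (u4 == u2).
  by rewrite -(oseg_bary_at_gt0 hD h1 h2 n12 r12 h4) (oseg_bary_at_gt0 hD h3 h4 n34 r34 h4)
    eqxx orbT.
by case/orP: e3 => /eqP ?; case/orP: e4 => /eqP ?; subst; auto; move: n34; rewrite eqxx.
Qed.

Lemma conv_vertex_mem K (s : seq (pt2 R)) u x : Defs.nondegenerate K ->
  {subset s <= vertices K} -> Defs.conv s x -> u \in vertices K -> 0 < bary_at K u x ->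
  u \in s.
Proof.
move=> hD hsub [l [hl0 hl1 ->]] hu; rewrite (affine_conv (bary_at_affine K u) hl1).
apply: contraTT => hn; rewrite -leNgt big1_seq // => q; rewrite mem_undup => hq.
rewrite bary_at_vertex //; last exact: hsub.
have -> : (u == q) = false by apply/negbTE; apply: contraNneq hn => ->.
by rewrite mulr0.
Qed.

End Edges.

Section Dyadic.
Variable R : realType.
Implicit Types (p q : pt2 R) (e f B : pt2 R * pt2 R).

Definition dyadic_frac (k i : nat) : R := i%:R / 2 ^+ k.
Definition dyadic_pt B k i := lerp B.1 B.2 (dyadic_frac k i).

Definition dyadic_sub e B := exists k i, (i < 2 ^ k)%N /\
  (e = (dyadic_pt B k i, dyadic_pt B k i.+1) \/ e = (dyadic_pt B k i.+1, dyadic_pt B k i)).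

Lemma pow2_neq0 k : (2 : R) ^+ k != 0.
Proof. by rewrite expf_neq0 // pnatr_eq0. Qed.

Lemma lerp_lerp p q (a b s : R) : lerp (lerp p q a) (lerp p q b) s = lerp p q (a + s * (b - a)).
Proof. by rewrite /lerp /=; congr (_, _); ring. Qed.

Lemma lerp_inj p q s s' : p != q -> lerp p q s = lerp p q s' -> s = s'.
Proof.
move=> hne [h1 h2].
have e1 : (s - s') * (q.1 - p.1) = 0 by lra.
have e2 : (s - s') * (q.2 - p.2) = 0 by lra.
have [hs|hs] := eqVneq (s - s') 0; first by apply/eqP; rewrite -subr_eq0 hs.
move: hne; rewrite [p]surjective_pairing [q]surjective_pairing.
move/eqP: e1; rewrite mulf_eq0 (negbTE hs) /= subr_eq0 => /eqP ->.
move/eqP: e2; rewrite mulf_eq0 (negbTE hs) /= subr_eq0 => /eqP ->.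
by rewrite eqxx.
Qed.

Lemma dyadic_sub_refl e : dyadic_sub e e.
Proof.
exists 0%N, 0%N; split => //; left.
by rewrite /dyadic_pt /dyadic_frac expr0 !divr1 mulr1n lerp0 lerp1 -surjective_pairing.
Qed.

Lemma dyadic_sub_swap e : dyadic_sub (e.2, e.1) e.
Proof.
exists 0%N, 0%N; split => //; right.
by rewrite /dyadic_pt /dyadic_frac expr0 !divr1 mulr1n lerp0 lerp1.
Qed.

Lemma dyadic_sub_common e f : f = e \/ f = (e.2, e.1) -> exists B, dyadic_sub e B /\ dyadic_sub f B.
Proof.
by case=> ->; exists e; split;
  [exact: dyadic_sub_refl|exact: dyadic_sub_refl|exact: dyadic_sub_refl|exact: dyadic_sub_swap].
Qed.

Lemma dyadic_sub_midpoint1 p q : dyadic_sub (midpoint p q, p) (p, q).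
Proof.
exists 1%N, 0%N; split => //; right.
by rewrite /dyadic_pt /dyadic_frac /= midpoint_lerp mulr0n mul0r lerp0 expr1 mulr1n.
Qed.

Lemma dyadic_sub_midpoint2 p q : dyadic_sub (midpoint p q, q) (p, q).
Proof.
exists 1%N, 1%N; split => //; left.
rewrite /dyadic_pt /dyadic_frac /= midpoint_lerp expr1 mulr1n; congr (_, _).
by rewrite -[LHS](lerp1 p q); congr lerp; field.
Qed.

Lemma dyadic_pt_nested B k l i j :
  dyadic_pt (dyadic_pt B k i, dyadic_pt B k i.+1) l j = dyadic_pt B (k + l) (i * 2 ^ l + j).
Proof.
rewrite {1}/dyadic_pt /= lerp_lerp; congr lerp.
rewrite /dyadic_frac -[i.+1]addn1 !natrD natrM natrX exprD.
by field; rewrite ?pow2_neq0.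
Qed.

Lemma dyadic_pt_nested_rev B k l i j : (j <= 2 ^ l)%N ->
  dyadic_pt (dyadic_pt B k i.+1, dyadic_pt B k i) l j =
  dyadic_pt B (k + l) (i.+1 * 2 ^ l - j).
Proof.
move=> hj; rewrite {1}/dyadic_pt /= lerp_lerp; congr lerp.
have hj' : (j <= i.+1 * 2 ^ l)%N by rewrite (leq_trans hj) // leq_pmull.
rewrite /dyadic_frac natrB // natrM natrX exprD -[i.+1]addn1 !natrD.
by field; rewrite ?pow2_neq0.
Qed.

Lemma dyadic_sub_trans e f B : dyadic_sub e f -> dyadic_sub f B -> dyadic_sub e B.
Proof.
case=> l [j [hj he]] [k [i [hi hf]]].
have hb : (i.+1 * 2 ^ l <= 2 ^ (k + l))%N by rewrite expnD leq_mul2r hi orbT.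
have up : (i * 2 ^ l + j < 2 ^ (k + l))%N.
  by apply: leq_trans hb; rewrite mulSn addnC ltn_add2r.
have hj1 : (j.+1 <= i.+1 * 2 ^ l)%N by rewrite (leq_trans hj) // leq_pmull.
have down : (i.+1 * 2 ^ l - j.+1 < 2 ^ (k + l))%N.
  by apply: leq_trans hb; rewrite ltn_subLR // addSn ltnS leq_addl.
have hsub : (i.+1 * 2 ^ l - j.+1).+1 = (i.+1 * 2 ^ l - j)%N by rewrite subnSK.
case: he => ->; case: hf => ->.
- by exists (k + l)%N, (i * 2 ^ l + j)%N; split; last by left; rewrite !dyadic_pt_nested addnS.
- exists (k + l)%N, (i.+1 * 2 ^ l - j.+1)%N; split => //; right.
  by rewrite !dyadic_pt_nested_rev ?hsub //; apply: ltnW.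
- by exists (k + l)%N, (i * 2 ^ l + j)%N; split; last by right; rewrite !dyadic_pt_nested addnS.
- exists (k + l)%N, (i.+1 * 2 ^ l - j.+1)%N; split => //; left.
  by rewrite !dyadic_pt_nested_rev ?hsub //; apply: ltnW.
Qed.

Lemma dyadic_frac_lt k l a b :
  (dyadic_frac k a < dyadic_frac l b) = (a * 2 ^ l < b * 2 ^ k)%N.
Proof.
rewrite /dyadic_frac ltr_pdivrMr ?exprn_gt0 // mulrAC ltr_pdivlMr ?exprn_gt0 //.
by rewrite -!(natrX _ 2) -!natrM ltr_nat.
Qed.

Lemma dyadic_frac_le k l a b :
  (dyadic_frac k a <= dyadic_frac l b) = (a * 2 ^ l <= b * 2 ^ k)%N.
Proof.
rewrite /dyadic_frac ler_pdivrMr ?exprn_gt0 // mulrAC ler_pdivlMr ?exprn_gt0 //.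
by rewrite -!(natrX _ 2) -!natrM ler_nat.
Qed.

Lemma dyadic_fracS k i : dyadic_frac k i < dyadic_frac k i.+1.
Proof. by rewrite dyadic_frac_lt ltn_pmul2r ?expn_gt0. Qed.

Lemma dyadic_interval_nested i j k l : (i * 2 ^ l.+1 < j.*2.+1 * 2 ^ k)%N ->
  (j.*2.+1 * 2 ^ k < i.+1 * 2 ^ l.+1)%N ->
  (i * 2 ^ l <= j * 2 ^ k)%N /\ (j.+1 * 2 ^ k <= i.+1 * 2 ^ l)%N.
Proof.
have hP : (0 < 2 ^ k)%N by rewrite expn_gt0.
case: (leqP k l) => hkl.
  have El : (2 ^ l = 2 ^ k * 2 ^ (l - k))%N by rewrite -expnD subnKC.
  rewrite expnS El; move: (2 ^ k)%N hP (2 ^ (l - k))%N => P hP c h1 h2.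
  have h1' : (i * c * 2 < j.*2.+1)%N by nia.
  have h2' : (j.*2.+1 < i.+1 * c * 2)%N by nia.
  by split; nia.
have Ek : (2 ^ k = 2 ^ l.+1 * 2 ^ (k - l.+1))%N by rewrite -expnD subnKC.
have hQ : (0 < 2 ^ l.+1)%N by rewrite expn_gt0.
rewrite Ek; move: (2 ^ l.+1)%N hQ (2 ^ (k - l.+1))%N => Q hQ c h1 h2.
have h1' : (i < j.*2.+1 * c)%N by nia.
have h2' : (j.*2.+1 * c < i.+1)%N by nia.
lia.
Qed.

Lemma cseg_lerp p q a b s : a < b -> a <= s -> s <= b ->
  cseg (lerp p q a, lerp p q b) (lerp p q s) /\ cseg (lerp p q b, lerp p q a) (lerp p q s).
Proof.
move=> hab h1 h2; have hp : 0 < b - a by rewrite subr_gt0.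
split.
  exists ((s - a) / (b - a)); split.
  - by apply: divr_ge0; rewrite subr_ge0 // ltW.
  - by rewrite ler_pdivrMr // mul1r lerD2r.
  - by rewrite /= lerp_lerp; congr lerp; field; rewrite gt_eqF.
exists ((b - s) / (b - a)); split.
- by apply: divr_ge0; rewrite subr_ge0 // ltW.
- by rewrite ler_pdivrMr // mul1r lerD2l lerN2.
- by rewrite /= lerp_lerp; congr lerp; field; rewrite gt_eqF.
Qed.

Lemma oseg_lerp p q a b x : a < b ->
  oseg (lerp p q a, lerp p q b) x \/ oseg (lerp p q b, lerp p q a) x ->
  exists s, [/\ x = lerp p q s, a < s & s < b].
Proof.
move=> hab [[t [t0 t1 ->]]|[t [t0 t1 ->]]] /=; rewrite lerp_lerp.
  by exists (a + t * (b - a)); split => //; nra.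
by exists (b + t * (a - b)); split => //; nra.
Qed.

Lemma midpoint_dyadic_pt B l j :
  midpoint (dyadic_pt B l j) (dyadic_pt B l j.+1) = dyadic_pt B l.+1 j.*2.+1.
Proof.
rewrite midpoint_lerp /dyadic_pt !lerp_lerp /dyadic_frac -!muln2.
rewrite -[j.+1]addn1 -[(j * 2).+1]addn1 !natrD natrM exprS.
by congr lerp; field; rewrite ?pow2_neq0.
Qed.

(* Dyadic pieces of a segment are nested or have disjoint interiors. *)
Lemma dyadic_sub_oseg_midpoint e f B : dyadic_sub e B -> dyadic_sub f B -> B.1 != B.2 ->
  oseg e (midpoint f.1 f.2) -> cseg e f.1 /\ cseg e f.2.
Proof.
case=> k [i [hi he]] [l [j [hj hf]]] hB hr.
have hm : midpoint f.1 f.2 = dyadic_pt B l.+1 j.*2.+1.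
  by rewrite -midpoint_dyadic_pt; case: hf => -> //=; rewrite midpointC.
have [s [hs s1 s2]] : exists s, [/\ midpoint f.1 f.2 = lerp B.1 B.2 s,
    dyadic_frac k i < s & s < dyadic_frac k i.+1].
  by apply: oseg_lerp; [exact: dyadic_fracS|case: he hr => -> hr; [left|right]].
have es : s = dyadic_frac l.+1 j.*2.+1 by apply: (lerp_inj hB); rewrite -hs hm.
subst s; move: s1 s2; rewrite !dyadic_frac_lt => s1 s2.
have [n1 n2] := dyadic_interval_nested s1 s2.
have c1 : dyadic_frac k i <= dyadic_frac l j by rewrite dyadic_frac_le.
have c2 : dyadic_frac l j.+1 <= dyadic_frac k i.+1 by rewrite dyadic_frac_le.
have c3 := ltW (dyadic_fracS l j).
have hk := dyadic_fracS k i.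
have [a1 a2] := cseg_lerp B.1 B.2 hk c1 (le_trans c3 c2).
have [b1 b2] := cseg_lerp B.1 B.2 hk (le_trans c1 c3) c2.
by case: he => ->; case: hf => -> /=.
Qed.

Lemma dyadic_sub_neq e B : dyadic_sub e B -> e.1 != e.2 -> B.1 != B.2.
Proof.
case=> k [i [_ he]]; apply: contraNneq => hB.
by case: he => -> /=; rewrite /dyadic_pt /lerp hB !subrr !mulr0.
Qed.

End Dyadic.

Section MeshInvariant.
Local Open Scope classical_set_scope.
Variable R : realType.
Implicit Types (K F G : tri R) (p : pt2 R) (e f : pt2 R * pt2 R) (T H : seq (tri R)).

Definition tri_disjoint K F := forall p, ~ (Defs.openT K p /\ Defs.openT F p).

Definition edges_of H := flatten (map (@edges R) H).

Definition child1 K : tri R := (midpoint (redge1 K) (redge2 K), newest K, redge1 K).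
Definition child2 K : tri R := (midpoint (redge1 K) (redge2 K), newest K, redge2 K).

(* [T] is the current mesh and [H] lists every triangle created so far. *)
Record mesh_inv T H : Prop := {
  hist_nondegenerate : forall F, F \in H -> Defs.nondegenerate F;
  mesh_sub_hist : {subset T <= H};
  mesh_uniq : uniq T;
  mesh_disjoint : forall G K, G \in T -> K \in T -> G != K -> tri_disjoint G K;
  mesh_nested : forall K F, K \in T -> F \in H -> subtri K F \/ tri_disjoint K F;
  hist_edges_dyadic : forall e f, e \in edges_of H -> f \in edges_of H ->
    (exists p, oseg e p /\ oseg f p) -> exists B, dyadic_sub e B /\ dyadic_sub f B }.

Lemma edges_ofP e H : reflect (exists2 F, F \in H & e \in edges F) (e \in edges_of H).
Proof. exact: flatten_mapP. Qed.

Lemma tri_disjoint_sym K F : tri_disjoint K F -> tri_disjoint F K.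
Proof. by move=> h p [a b]; apply: (h p). Qed.

Lemma tri_disjoint_subtri K F G : Defs.nondegenerate K -> Defs.nondegenerate F ->
  subtri K F -> tri_disjoint F G -> tri_disjoint K G.
Proof. by move=> hK hF hs hd p [h1 h2]; apply: (hd p); split => //; exact: subtri_openT h1. Qed.

Lemma children_nondegenerate K : Defs.nondegenerate K ->
  Defs.nondegenerate (child1 K) /\ Defs.nondegenerate (child2 K).
Proof.
move=> hD; have hD' : tri_det K != 0 := hD.
have [e1 e2] : tri_det (child1 K) = tri_det K / 2 /\ tri_det (child2 K) = - (tri_det K / 2).
  by rewrite /tri_det /child1 /child2 /newest /redge1 /redge2 /midpoint /det2 /psub /=;
    split; field.
rewrite /Defs.nondegenerate -/(tri_det (child1 K)) -/(tri_det (child2 K)) e1 e2 oppr_eq0.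
by split; rewrite mulf_eq0 invr_eq0 pnatr_eq0 (negbTE hD').
Qed.

Lemma midpoint_closedT K : Defs.closedT K (midpoint (redge1 K) (redge2 K)).
Proof.
exists 0, (1/2), (1/2); split; [lra|lra|lra|lra|].
by rewrite /comb3 /midpoint; congr (_, _); field.
Qed.

Lemma children_subtri K : subtri (child1 K) K /\ subtri (child2 K) K.
Proof.
split => q; rewrite !inE /child1 /child2 /newest /redge1 /redge2 /= => /or3P [] /eqP ->;
  (try exact: midpoint_closedT); apply: vertex_closedT; rewrite !inE eqxx ?orbT //.
Qed.

Lemma child1_neq_child2 K : Defs.nondegenerate K -> child1 K != child2 K.
Proof. by case/vertices_neq => _ _; apply: contra => /eqP [->]. Qed.

Lemma children_disjoint K : Defs.nondegenerate K -> tri_disjoint (child1 K) (child2 K).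
Proof.
move=> hD p [[l0 [l1 [l2 [h0 h1 h2 hl hp]]]] [m0 [m1 [m2 [g0 g1 g2 hm hq]]]]].
have [[_ h2' h3] [_ h5 h6] [_ h8 h9]] := bary_vertices hD.
have [_ x1 x2] := bary_affine K.
have : bary1 K p = l0 / 2 + l2 /\ bary1 K p = m0 / 2.
  rewrite {1}hp {1}hq !affine_comb3 // /child1 /child2 /newest /redge1 /redge2 /=.
  rewrite !affine_midpoint // -/(newest K) -/(redge1 K) -/(redge2 K) h2' h5 h8.
  by split; ring.
have : bary2 K p = l0 / 2 /\ bary2 K p = m0 / 2 + m2.
  rewrite {1}hp {1}hq !affine_comb3 // /child1 /child2 /newest /redge1 /redge2 /=.
  rewrite !affine_midpoint // -/(newest K) -/(redge1 K) -/(redge2 K) h3 h6 h9.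
  by split; ring.
lra.
Qed.

Lemma edges_oseg_dyadic K e f p : Defs.nondegenerate K ->
  e.1 \in vertices K -> e.2 \in vertices K -> e.1 != e.2 -> f \in edges K ->
  oseg e p -> oseg f p -> exists B, dyadic_sub e B /\ dyadic_sub f B.
Proof.
move=> hD h1 h2 hn hf re rf.
have [h3 h4] := edge_vertices hf.
have := oseg_vertices_eq hD h1 h2 h3 h4 hn (edge_neq hD hf).
by rewrite -!surjective_pairing => /(_ p re rf); exact: dyadic_sub_common.
Qed.

Lemma conforming_mesh_inv T0 : conforming T0 -> mesh_inv T0 T0.
Proof.
case=> hu hnd hc; split => //.
- move=> G K hG hK hne p [w1 w2]; have [h _] := hc G K hG hK hne.
  by have : (Defs.openT G `&` Defs.openT K) p by []; rewrite h.
- move=> K F hK hF; have [<-|hne] := eqVneq K F; first by left; exact: subtri_refl.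
  right => p [w1 w2]; have [h _] := hc K F hK hF hne.
  by have : (Defs.openT K `&` Defs.openT F) p by []; rewrite h.
move=> e f /edges_ofP [K hK heK] /edges_ofP [K' hK' hfK'] [p [re rf]].
have hD := hnd K hK; have hD' := hnd K' hK'.
have [h1 h2] := edge_vertices heK; have hn := edge_neq hD heK.
have [eK|hne] := eqVneq K K'; first by subst K'; exact: (edges_oseg_dyadic hD h1 h2 hn hfK' re rf).
have [_ hcv] := hc K K' hK hK' hne.
have pc : (Defs.closedT K `&` Defs.closedT K') p.
  by split; [apply: (edge_closedT heK)|apply: (edge_closedT hfK')]; exact: oseg_cseg.
rewrite hcv in pc.
have sub : {subset [seq p <- vertices K | p \in vertices K'] <= vertices K}.
  by move=> x; rewrite mem_filter => /andP [].
have r' : oseg (e.1, e.2) p by rewrite -surjective_pairing.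
have g1 : e.1 \in vertices K'.
  have := conv_vertex_mem hD sub pc h1; rewrite (oseg_bary_at_gt0 hD h1 h2 hn r' h1) eqxx.
  by move/(_ isT); rewrite mem_filter => /andP [].
have g2 : e.2 \in vertices K'.
  have := conv_vertex_mem hD sub pc h2; rewrite (oseg_bary_at_gt0 hD h1 h2 hn r' h2) eqxx orbT.
  by move/(_ isT); rewrite mem_filter => /andP [].
exact: (edges_oseg_dyadic hD' g1 g2 hn hfK' re rf).
Qed.

End MeshInvariant.

Section Bisection.
Variable R : realType.
Variables (T H : seq (tri R)) (K : tri R).
Hypotheses (I : mesh_inv T H) (hK : K \in T).
Implicit Types (F G : tri R) (p : pt2 R) (e f : pt2 R * pt2 R).

Let hKH : K \in H := mesh_sub_hist I hK.
Let hD : Defs.nondegenerate K := hist_nondegenerate I hKH.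
Let m := midpoint (redge1 K) (redge2 K).

Lemma oseg_mid_newest_openT p : oseg (m, newest K) p -> Defs.openT K p.
Proof.
move=> [t [t0 t1 ->]] /=; apply/(openT_bary _ hD).
have [[h1 h2 h3] [h4 h5 h6] [h7 h8 h9]] := bary_vertices hD.
have [x0 x1 x2] := bary_affine K.
by rewrite !affine_lerp // /m !affine_midpoint // h1 h2 h3 h4 h5 h6 h7 h8 h9; split; lra.
Qed.

Lemma oseg_mid_redge1 p : oseg (m, redge1 K) p -> oseg (redge1 K, redge2 K) p.
Proof.
case=> t [t0 t1 ->]; exists ((1 - t) / 2); split; [lra|lra|].
by rewrite /= /m /midpoint /lerp /=; congr (_, _); field.
Qed.

Lemma oseg_mid_redge2 p : oseg (m, redge2 K) p -> oseg (redge1 K, redge2 K) p.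
Proof.
case=> t [t0 t1 ->]; exists ((1 + t) / 2); split; [lra|lra|].
by rewrite /= /m /midpoint /lerp /=; congr (_, _); field.
Qed.

Lemma refinement_edge_hist : (redge1 K, redge2 K) \in edges_of H.
Proof. by apply/edges_ofP; exists K => //; rewrite !inE !eqxx ?orbT. Qed.

Lemma oseg_refinement_edge_not_openT p :
  oseg (redge1 K, redge2 K) p -> ~ Defs.openT K p.
Proof. by apply: edge_oseg_not_openT; rewrite // !inE !eqxx ?orbT. Qed.

(* Old edges avoid the interior of K: K is either inside the old triangle, or
   disjoint from it and then also from its boundary. *)
Lemma hist_edge_not_openT f p : f \in edges_of H -> oseg f p -> ~ Defs.openT K p.
Proof.
move=> /edges_ofP [F hF hfF] rf op; have hDF := hist_nondegenerate I hF.
case: (mesh_nested I hK hF) => [hs|hd].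
  by apply: (edge_oseg_not_openT hDF hfF rf); exact: subtri_openT op.
have cl : Defs.closedT F p by apply: (edge_closedT hfF); exact: oseg_cseg.
by have [q [q1 q2]] := openT_closedT_meet hD hDF cl op; apply: (hd q).
Qed.

Lemma edges_of_bisect e : e \in edges_of (children K ++ H) ->
  [\/ e = (m, newest K), e = (m, redge1 K), e = (m, redge2 K) | e \in edges_of H].
Proof.
rewrite /edges_of map_cat flatten_cat mem_cat => /orP [|]; last by constructor 4.
have e1 : (newest K, redge1 K) \in edges_of H.
  by apply/edges_ofP; exists K; rewrite // !inE eqxx.
have e2 : (newest K, redge2 K) \in edges_of H.
  by apply/edges_ofP; exists K; rewrite // !inE eqxx orbT.
rewrite /= !inE => /orP [/eqP->|/orP [/eqP->|/orP [/eqP->|/orP [/eqP->|/orP [/eqP->|/eqP->]]]]];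
  by [constructor 1|constructor 2|constructor 3|constructor 4].
Qed.

Lemma new_edge_dyadic e f :
  e = (m, newest K) \/ e = (m, redge1 K) \/ e = (m, redge2 K) ->
  [\/ f = (m, newest K), f = (m, redge1 K), f = (m, redge2 K) | f \in edges_of H] ->
  (exists p, oseg e p /\ oseg f p) -> exists B, dyadic_sub e B /\ dyadic_sub f B.
Proof.
move=> he hf [p [re rf]].
have abE := refinement_edge_hist.
have notab := oseg_refinement_edge_not_openT.
case: he => [?|[?|?]]; subst e.
- have op := oseg_mid_newest_openT re.
  case: hf => [?|?|?|hf]; subst.
  + by exists (m, newest K); split; exact: dyadic_sub_refl.
  + by case: (notab _ (oseg_mid_redge1 rf)).
  + by case: (notab _ (oseg_mid_redge2 rf)).
  + by case: (hist_edge_not_openT hf rf op).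
- case: hf => [?|?|?|hf]; subst.
  + by case: (notab _ (oseg_mid_redge1 re)); exact: oseg_mid_newest_openT.
  + by exists (m, redge1 K); split; exact: dyadic_sub_refl.
  + exists (redge1 K, redge2 K).
    by split; [exact: dyadic_sub_midpoint1|exact: dyadic_sub_midpoint2].
  + have [B [b1 b2]] := hist_edges_dyadic I abE hf (ex_intro _ p (conj (oseg_mid_redge1 re) rf)).
    by exists B; split => //; apply: dyadic_sub_trans b1; exact: dyadic_sub_midpoint1.
- case: hf => [?|?|?|hf]; subst.
  + by case: (notab _ (oseg_mid_redge2 re)); exact: oseg_mid_newest_openT.
  + exists (redge1 K, redge2 K).
    by split; [exact: dyadic_sub_midpoint2|exact: dyadic_sub_midpoint1].
  + by exists (m, redge2 K); split; exact: dyadic_sub_refl.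
  + have [B [b1 b2]] := hist_edges_dyadic I abE hf (ex_intro _ p (conj (oseg_mid_redge2 re) rf)).
    by exists B; split => //; apply: dyadic_sub_trans b1; exact: dyadic_sub_midpoint2.
Qed.

Lemma bisect_edges_dyadic e f : e \in edges_of (children K ++ H) ->
  f \in edges_of (children K ++ H) -> (exists p, oseg e p /\ oseg f p) ->
  exists B, dyadic_sub e B /\ dyadic_sub f B.
Proof.
move=> /edges_of_bisect he /edges_of_bisect hf.
case: he => [->|->|->|he] hp.
1-3: by apply: new_edge_dyadic; auto.
case: hf hp => [->|->|->|hf] hp; last by case: (hist_edges_dyadic I he hf hp) => B hB; exists B.
- case: hp => p [h1 h2].
  have [B []] := new_edge_dyadic (or_introl erefl) (@Or44 _ _ _ _ he)
    (ex_intro _ p (conj h2 h1)).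
  by exists B.
- case: hp => p [h1 h2].
  have [B []] := new_edge_dyadic (or_intror (or_introl erefl)) (@Or44 _ _ _ _ he)
    (ex_intro _ p (conj h2 h1)).
  by exists B.
- case: hp => p [h1 h2].
  have [B []] := new_edge_dyadic (or_intror (or_intror erefl)) (@Or44 _ _ _ _ he)
    (ex_intro _ p (conj h2 h1)).
  by exists B.
Qed.

Lemma bisectE : bisect T K = child1 K :: child2 K :: rem K T.
Proof. by []. Qed.

Lemma children_histE : children K ++ H = child1 K :: child2 K :: H.
Proof. by []. Qed.

Lemma mem_rem_mesh G : G \in rem K T -> G \in T /\ G != K.
Proof. by rewrite (mem_rem_uniq _ (mesh_uniq I)) !inE => /andP [-> ->]. Qed.

Lemma child_disjoint_rem c G : Defs.nondegenerate c -> subtri c K -> G \in rem K T ->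
  tri_disjoint c G.
Proof.
move=> hc sc /mem_rem_mesh [hG hGK]; apply: (tri_disjoint_subtri hc hD sc).
exact/tri_disjoint_sym/(mesh_disjoint I hG hK hGK).
Qed.

Lemma bisect_uniq : uniq (bisect T K).
Proof.
have [n1 n2] := children_nondegenerate hD; have [s1 s2] := children_subtri K.
have notin c : Defs.nondegenerate c -> subtri c K -> c \notin rem K T.
  move=> hc sc; apply/negP => /mem_rem_mesh [hcT hcK].
  have hd := mesh_disjoint I hcT hK hcK.
  apply: (hd (centroid c)); split; first exact: centroid_openT.
  exact: (subtri_openT hc hD sc (centroid_openT hc)).
rewrite bisectE /= rem_uniq ?(mesh_uniq I) // andbT inE negb_or.
by rewrite (child1_neq_child2 hD) !notin.
Qed.

Lemma bisect_disjoint G G' : G \in bisect T K -> G' \in bisect T K -> G != G' ->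
  tri_disjoint G G'.
Proof.
have [n1 n2] := children_nondegenerate hD; have [s1 s2] := children_subtri K.
rewrite bisectE !inE.
case/or3P => [/eqP->|/eqP->|hG]; case/or3P => [/eqP->|/eqP->|hG']; rewrite ?eqxx // => hne.
- exact: children_disjoint.
- exact: child_disjoint_rem.
- exact/tri_disjoint_sym/children_disjoint.
- exact: child_disjoint_rem.
- exact/tri_disjoint_sym/child_disjoint_rem.
- exact/tri_disjoint_sym/child_disjoint_rem.
- by apply: (mesh_disjoint I) => //; [case/mem_rem_mesh: hG|case/mem_rem_mesh: hG'].
Qed.

Lemma bisect_nested G F : G \in bisect T K -> F \in children K ++ H ->
  subtri G F \/ tri_disjoint G F.
Proof.
have [n1 n2] := children_nondegenerate hD; have [s1 s2] := children_subtri K.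
have child_hist c F' : Defs.nondegenerate c -> subtri c K -> F' \in H ->
    subtri c F' \/ tri_disjoint c F'.
  move=> hc sc hF; case: (mesh_nested I hK hF) => h.
    by left; apply: (subtri_trans (hist_nondegenerate I hF) sc h).
  by right; apply: (tri_disjoint_subtri hc hD sc h).
rewrite bisectE children_histE !inE.
case/or3P => [/eqP->|/eqP->|hG]; case/or3P => [/eqP->|/eqP->|hF].
- by left; exact: subtri_refl.
- by right; exact: children_disjoint.
- exact: child_hist.
- by right; exact/tri_disjoint_sym/children_disjoint.
- by left; exact: subtri_refl.
- exact: child_hist.
- by right; exact/tri_disjoint_sym/child_disjoint_rem.
- by right; exact/tri_disjoint_sym/child_disjoint_rem.
- by case/mem_rem_mesh: hG => hG _; apply: (mesh_nested I).
Qed.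

Lemma mesh_inv_bisect : mesh_inv (bisect T K) (children K ++ H).
Proof.
have [n1 n2] := children_nondegenerate hD.
split.
- by move=> F; rewrite children_histE !inE => /or3P [/eqP->|/eqP->|/(hist_nondegenerate I)].
- move=> G; rewrite bisectE children_histE !inE.
  case/or3P => [->|->|/mem_rem_mesh [hG _]]; rewrite ?orbT //.
  by rewrite (mesh_sub_hist I hG) !orbT.
- exact: bisect_uniq.
- exact: bisect_disjoint.
- exact: bisect_nested.
- exact: bisect_edges_dyadic.
Qed.

End Bisection.

Section History.
Variable R : realType.
Implicit Types (T H : seq (tri R)).

Inductive history (T0 : seq (tri R)) : seq (tri R) -> seq (tri R) -> Prop :=
  | history0 : history T0 T0 T0
  | historyS T H K : history T0 T H -> K \in T -> history T0 (bisect T K) (children K ++ H).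

Lemma history_mesh_inv T0 T H : conforming T0 -> history T0 T H -> mesh_inv T H.
Proof.
move=> hc; elim => [|T' H' K _ IH hK]; first exact: conforming_mesh_inv.
exact: mesh_inv_bisect.
Qed.

Lemma refines_history T0 T1 T2 H1 : refines T1 T2 -> history T0 T1 H1 ->
  exists2 H2, history T0 T2 H2 & {subset H1 <= H2}.
Proof.
elim => [|T K _ IH hK] h1; first by exists H1.
have [H2 h2 s2] := IH h1.
exists (children K ++ H2); first exact: historyS.
by move=> x /s2 hx; rewrite mem_cat hx orbT.
Qed.

Lemma refines_nondegenerate T0 T E : conforming T0 -> refines T0 T -> E \in T ->
  Defs.nondegenerate E.
Proof.
move=> hc hT hE; have [H hH _] := refines_history hT (history0 T0).
have I := history_mesh_inv hc hH.
exact: (hist_nondegenerate I (mesh_sub_hist I hE)).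
Qed.

End History.

Section Parents.
Local Open Scope classical_set_scope.
Variable R : realType.
Implicit Types (K E : tri R) (x z : pt2 R) (T : seq (tri R)).

Lemma nodesP x T : reflect (exists2 F, F \in T & x \in vertices F) (x \in nodes T).
Proof. by rewrite /nodes mem_undup; apply: flatten_mapP. Qed.

Lemma nodes_bisect T K : K \in T -> {subset nodes T <= nodes (bisect T K)}.
Proof.
move=> hK x /nodesP [G hG hx]; apply/nodesP; rewrite bisectE.
have [eGK|nGK] := eqVneq G K; last by exists G; rewrite // !inE (rem_mem nGK hG) !orbT.
move: hx; rewrite eGK !inE => /or3P [] /eqP ->;
  [exists (child1 K)|exists (child1 K)|exists (child2 K)];
  by rewrite !inE !eqxx ?orbT.
Qed.

Lemma nodes_refines T1 T2 : refines T1 T2 -> {subset nodes T1 <= nodes T2}.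
Proof. by elim => [|T K _ IH hK] x hx //; apply: nodes_bisect => //; exact: IH. Qed.

Lemma NEP T E x : reflect (x \in nodes T /\ bdT E x) (x \in NE T E).
Proof.
rewrite /NE mem_filter; apply: (iffP andP) => [[/asboolP hb hn]|[hn hb]] //.
by split => //; apply/asboolP.
Qed.

Lemma NE_vertex_or_HE T E x : x \in NE T E -> x \in vertices E \/ x \in HE T E.
Proof. by move=> hx; rewrite /HE mem_filter hx andbT; case: (x \in vertices E); [left|right]. Qed.

Lemma NE_uniq T E : uniq (NE T E).
Proof. by rewrite /NE filter_uniq // /nodes undup_uniq. Qed.

Lemma HE_uniq T E : uniq (HE T E).
Proof. by rewrite /HE filter_uniq ?NE_uniq. Qed.

Lemma HE_NE T E x : x \in HE T E -> x \in NE T E.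
Proof. by rewrite /HE mem_filter => /andP []. Qed.

(* The edge of E through x and the refinement edge [z1, z2] created at x overlap,
   so they are dyadic pieces of one segment; as x is the midpoint of [z1, z2] and
   lies inside the edge of E, so does all of [z1, z2]. *)
Lemma parent_pair_closedT T0 T E x z1 z2 : conforming T0 -> refines T0 T -> E \in T ->
  bdT E x -> x \notin vertices E -> parent_pair T0 T x z1 z2 ->
  [/\ Defs.closedT E z1, Defs.closedT E z2, z1 \in nodes T & z2 \in nodes T].
Proof.
move=> hc hT hE hbd hnv [T' [K [r1 hK r2 [-> -> hx]]]].
have [H' h' _] := refines_history r1 (history0 T0).
have [H hH sH] := refines_history r2 (historyS h' hK).
have I := history_mesh_inv hc hH.
have hKH : K \in H.
  by apply: sH; rewrite mem_cat (mesh_sub_hist (history_mesh_inv hc h') hK) orbT.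
have hDE := hist_nondegenerate I (mesh_sub_hist I hE).
have [e heE re] := bdT_oseg_edge hDE hbd hnv.
have abE : (redge1 K, redge2 K) \in edges_of H.
  by apply/edges_ofP; exists K => //; rewrite !inE !eqxx ?orbT.
have eE : e \in edges_of H by apply/edges_ofP; exists E; first exact: (mesh_sub_hist I hE).
have rab : oseg (redge1 K, redge2 K) x.
  by rewrite hx; exists (1/2); split; [lra|lra|rewrite midpoint_lerp].
have [B [b1 b2]] := hist_edges_dyadic I eE abE (ex_intro _ x (conj re rab)).
have hB := dyadic_sub_neq b1 (edge_neq hDE heE).
have [c1 c2] := dyadic_sub_oseg_midpoint b1 b2 hB (eq_ind _ _ re _ hx).
split; [exact: edge_closedT heE _ c1|exact: edge_closedT heE _ c2| |];
  apply: (nodes_refines r2); apply/nodesP; rewrite bisectE.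
- by exists (child1 K); rewrite !inE !eqxx ?orbT.
- by exists (child2 K); rewrite !inE !eqxx ?orbT.
Qed.

Lemma midpoint_bdT E p q : Defs.nondegenerate E -> bdT E (midpoint p q) ->
  Defs.closedT E p -> Defs.closedT E q -> bdT E p.
Proof.
move=> hD [_ hno] hp hq; split => // hop; apply: hno.
move/(openT_bary _ hD): hop => [a0 a1 a2]; move/(closedT_bary _ hD): hq => [b0 b1 b2].
have [x0 x1 x2] := bary_affine E.
by apply/(openT_bary _ hD); rewrite !affine_midpoint //; split; lra.
Qed.

Lemma parent_pair_NE T0 T E x z1 z2 : conforming T0 -> refines T0 T -> E \in T ->
  x \in HE T E -> parent_pair T0 T x z1 z2 -> z1 \in NE T E /\ z2 \in NE T E.
Proof.
move=> hc hT hE; rewrite /HE mem_filter => /andP [hxv /NEP [_ hbd]] pp.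
have hD := refines_nondegenerate hc hT hE.
have [c1 c2 n1 n2] := parent_pair_closedT hc hT hE hbd hxv pp.
have hx : x = midpoint z1 z2 by case: pp => T' [K [_ _ _ [-> -> ->]]].
split; apply/NEP; split => //.
  by apply: (midpoint_bdT hD _ c1 c2); rewrite -hx.
by apply: (midpoint_bdT hD _ c2 c1); rewrite midpointC -hx.
Qed.

Lemma parents_spec T0 T z : parent_pair T0 T z (parents T0 T z).1 (parents T0 T z).2 \/
  parents T0 T z = (z, z).
Proof. by rewrite /parents; case: pselect => [h|_]; [left; case: (cid h)|right]. Qed.

(* A hanging node whose parents are the junk default (z, z) is its own parent,
   so it has no finite index. *)
Lemma idx_le_self_parents T0 T z n : ~ proper_node T z -> parents T0 T z = (z, z) ->
  ~ idx_le T0 T z n.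
Proof.
move=> hnp hpz h.
suff: forall y, idx_le T0 T y n -> y = z -> False by move/(_ z h erefl).
move=> y0; elim => [y m hp|y m hn h1 IH1 h2 IH2] ey; first by subst y.
by subst y; apply: IH1; rewrite hpz.
Qed.

Lemma idx_le_inv T0 T z n : idx_le T0 T z n -> proper_node T z \/
  exists m, [/\ n = m.+1, idx_le T0 T (parents T0 T z).1 m & idx_le T0 T (parents T0 T z).2 m].
Proof. by case => [y m hp|y m hnp h1 h2]; [left|right; exists m]. Qed.

Lemma HE_parents T0 T E x n : E \in T -> x \in HE T E -> idx_le T0 T x n ->
  exists m, [/\ n = m.+1, idx_le T0 T (parents T0 T x).1 m,
    idx_le T0 T (parents T0 T x).2 m &
    parent_pair T0 T x (parents T0 T x).1 (parents T0 T x).2].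
Proof.
move=> hE; rewrite /HE mem_filter => /andP [hxv /NEP [_ [hcl _]]] hidx.
have hnp : ~ proper_node T x by move=> hp; move: hxv; rewrite (hp E hE hcl).
case: (idx_le_inv hidx) => [//|[m [-> h1 h2]]]; exists m; split => //.
case: (parents_spec T0 T x) => // hd.
by case: (idx_le_self_parents (n := m) hnp hd); rewrite hd in h1.
Qed.

End Parents.

Section Interpolation.
Variable R : realType.
Implicit Types (E : tri R) (T : seq (tri R)) (v f : pt2 R -> R) (x z : pt2 R).

Definition interp_err E v x := v x - interpP1 E v x.

Lemma interpP1_affine E v : affine (interpP1 E v).
Proof.
have [[a0 [b0 [c0 h0]]] [a1 [b1 [c1 h1]]] [a2 [b2 [c2 h2]]]] := bary_affine E.
set A := v (newest E); set B := v (redge1 E); set C := v (redge2 E).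
exists (a0 * A + a1 * B + a2 * C), (b0 * A + b1 * B + b2 * C), (c0 * A + c1 * B + c2 * C).
move=> x; have -> : interpP1 E v x = bary0 E x * A + bary1 E x * B + bary2 E x * C by [].
by rewrite h0 h1 h2; ring.
Qed.

Lemma interp_err_vertex E v z : Defs.nondegenerate E -> z \in vertices E -> interp_err E v z = 0.
Proof.
move=> hD; have [[h1 h2 h3] [h4 h5 h6] [h7 h8 h9]] := bary_vertices hD.
have -> : interp_err E v z =
  v z - (bary0 E z * v (newest E) + bary1 E z * v (redge1 E) + bary2 E z * v (redge2 E)) by [].
by rewrite !inE => /or3P [] /eqP ->; rewrite ?h1 ?h2 ?h3 ?h4 ?h5 ?h6 ?h7 ?h8 ?h9; ring.
Qed.

Lemma interp_err_local_space T E VE v : local_space T E VE -> VE v -> VE (interp_err E v).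
Proof.
case=> [[_ hadd hsc] _ _ haff _] hv.
have -> : interp_err E v = (fun x => v x + (-1) * interpP1 E v x).
  by apply: funext => x; rewrite /interp_err; ring.
by apply: hadd => //; apply: hsc; exact: haff (interpP1_affine E v).
Qed.

Lemma sum_NE_HE T E f : (forall z, z \in vertices E -> f z = 0) ->
  \sum_(x <- NE T E) f x = \sum_(x <- HE T E) f x.
Proof.
move=> hf; rewrite /HE [in RHS]big_filter [LHS](bigID (fun x => x \in vertices E)) /=.
by rewrite big1 ?add0r // => x /hf.
Qed.

End Interpolation.

Section Sums.
Variable R : realFieldType.

Lemma ler_term_sum (T : eqType) (s : seq T) (F : T -> R) y : uniq s -> y \in s ->
  (forall x, 0 <= F x) -> F y <= \sum_(x <- s) F x.
Proof. by move=> us ys h0; rewrite (bigD1_seq y) //= lerDl sumr_ge0. Qed.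

Lemma ler_sum_const (T : eqType) (s : seq T) (F : T -> R) c :
  (forall x, x \in s -> F x <= c) -> \sum_(x <- s) F x <= (size s)%:R * c.
Proof.
elim: s => [|a s IH] h; first by rewrite big_nil mul0r.
rewrite big_cons /= -addn1 natrD mulrDl mul1r addrC lerD //.
  by apply: IH => x hx; apply: h; rewrite inE hx orbT.
by apply: h; rewrite inE eqxx.
Qed.

Lemma sqr_sub_half_le (a b c : R) : (a - (b + c) / 2) ^+ 2 <= 2 * a ^+ 2 + b ^+ 2 + c ^+ 2.
Proof.
have h1 := sqr_ge0 (a + (b + c) / 2); have h2 := sqr_ge0 (b - c).
by rewrite !expr2 in h1 h2 *; nra.
Qed.

Lemma sqr_add_half_le (a b c : R) : (a + (b + c) / 2) ^+ 2 <= 2 * a ^+ 2 + b ^+ 2 + c ^+ 2.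
Proof.
have := sqr_sub_half_le a (- b) (- c); rewrite !sqrrN.
by have -> : a - (- b + - c) / 2 = a + (b + c) / 2 by field.
Qed.

Lemma two_sided_bound (cs Cs a b S D r : R) : 0 < cs -> 0 < Cs -> 0 <= a -> 0 <= b ->
  0 <= S -> 0 <= D -> cs * r <= S -> S <= Cs * r -> D <= a * S -> S <= b * D ->
  D <= (a * Cs + b / cs + 1) * r /\ r <= (a * Cs + b / cs + 1) * D.
Proof.
move=> hcs hCs ha hb hS hD h1 h2 h3 h4.
have hr : 0 <= r by rewrite -(pmulr_rge0 _ hCs); apply: le_trans h2.
have hbc : 0 <= b / cs by rewrite divr_ge0 // ltW.
split.
  have : a * S <= a * (Cs * r) by rewrite ler_wpM2l.
  have := mulr_ge0 hbc hr.
  lra.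
have : r <= S / cs by rewrite ler_pdivlMr // mulrC.
have : S / cs <= b / cs * D by rewrite mulrAC ler_pM2r ?invr_gt0.
have := mulr_ge0 (mulr_ge0 ha (ltW hCs)) hD.
lra.
Qed.

End Sums.

Section DyadicNodes.
Variable R : realType.
Variables (T0 T : seq (tri R)) (E : tri R).
Hypotheses (hc : conforming T0) (hT : refines T0 T) (hE : E \in T).

Definition dyadic_bary n i j k : pt2 R :=
  comb3 (dyadic_frac R n i) (dyadic_frac R n j) (dyadic_frac R n k)
    (newest E) (redge1 E) (redge2 E).

Lemma vertex_dyadic_bary n p : p \in vertices E ->
  exists i j k, (i + j + k = 2 ^ n)%N /\ p = dyadic_bary n i j k.
Proof.
have hn := pow2_neq0 R n.
rewrite !inE => /or3P [] /eqP ->;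
  [exists (2 ^ n)%N, 0%N, 0%N|exists 0%N, (2 ^ n)%N, 0%N|exists 0%N, 0%N, (2 ^ n)%N];
  (split; first by rewrite ?addn0);
  by rewrite /dyadic_bary /dyadic_frac natrX /comb3 [LHS]surjective_pairing;
    congr (_, _); field.
Qed.

Lemma midpoint_dyadic_bary n i1 j1 k1 i2 j2 k2 :
  midpoint (dyadic_bary n i1 j1 k1) (dyadic_bary n i2 j2 k2) =
  dyadic_bary n.+1 (i1 + i2) (j1 + j2) (k1 + k2).
Proof.
have hn := pow2_neq0 R n.
by rewrite /dyadic_bary /dyadic_frac /midpoint /comb3 /= !natrD exprS; congr (_, _); field.
Qed.

(* Each generation of hanging nodes halves the mesh of barycentric coordinates. *)
Lemma NE_dyadic_bary n p : p \in NE T E -> idx_le T0 T p n ->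
  exists i j k, (i + j + k = 2 ^ n)%N /\ p = dyadic_bary n i j k.
Proof.
elim: n p => [|n IH] p /NE_vertex_or_HE [hv|hp] hi; try exact: vertex_dyadic_bary.
  by have [m [] //] := HE_parents hE hp hi.
have [m [[<-] i1 i2 pp]] := HE_parents hE hp hi.
have [n1 n2] := parent_pair_NE hc hT hE hp pp.
have [a1 [b1 [c1 [s1 e1]]]] := IH _ n1 i1; have [a2 [b2 [c2 [s2 e2]]]] := IH _ n2 i2.
exists (a1 + a2)%N, (b1 + b2)%N, (c1 + c2)%N; split; first by rewrite expnS; lia.
by case: pp => T' [K [_ _ _ [_ _ ->]]]; rewrite e1 e2 midpoint_dyadic_bary.
Qed.

Lemma size_HE Lambda : admissible Lambda T0 T ->
  (size (HE T E) <= (2 ^ Lambda).+1 * (2 ^ Lambda).+1)%N.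
Proof.
move=> hadm; set N := (2 ^ Lambda).+1.
set L := [seq dyadic_bary Lambda i j (2 ^ Lambda - i - j) | i <- iota 0 N, j <- iota 0 N].
have -> : (N * N = size L)%N by rewrite size_allpairs size_iota.
apply: uniq_leq_size; first exact: HE_uniq.
move=> x /HE_NE hxN.
have [i [j [k [s ->]]]] := NE_dyadic_bary hxN (hadm x (NEP _ _ _ hxN).1).
have -> : k = (2 ^ Lambda - i - j)%N by lia.
apply: (allpairs_f (fun i j => dyadic_bary Lambda i j (2 ^ Lambda - i - j))).
all: by rewrite mem_iota; lia.
Qed.

End DyadicNodes.

Section Details.
Variable R : realType.
Variables (T0 T : seq (tri R)) (E : tri R) (v : pt2 R -> R).
Hypotheses (hc : conforming T0) (hT : refines T0 T) (hE : E \in T).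

Let hD := refines_nondegenerate hc hT hE.
Local Notation w := (interp_err E v).
Local Notation S := (\sum_(x <- HE T E) w x ^+ 2).
Local Notation D := (\sum_(x <- HE T E) detail T0 T E v x ^+ 2).

Lemma sum_NE_interp_err : \sum_(x <- NE T E) w x ^+ 2 = S.
Proof. by apply: sum_NE_HE => z hz; rewrite interp_err_vertex // expr0n. Qed.

Lemma detail_interp_err x n : x \in HE T E -> idx_le T0 T x n ->
  detail T0 T E v x = w x - (w (parents T0 T x).1 + w (parents T0 T x).2) / 2.
Proof.
move=> hx hi; have [m [_ _ _ pp]] := HE_parents hE hx hi.
have hxv : x \notin vertices E by move: hx; rewrite /HE mem_filter => /andP [].
have hm : x = midpoint (parents T0 T x).1 (parents T0 T x).2.
  by case: pp => T' [K [_ _ _ [_ _ ?]]].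
have hI : interpP1 E v x =
    (interpP1 E v (parents T0 T x).1 + interpP1 E v (parents T0 T x).2) / 2.
  by rewrite {1}hm affine_midpoint //; exact: interpP1_affine.
by rewrite /detail (negbTE hxv) /interp_err hI; ring.
Qed.

Lemma sqr_interp_err_le_sum x : x \in NE T E -> w x ^+ 2 <= S.
Proof.
move=> hx; rewrite -sum_NE_interp_err.
by apply: ler_term_sum (@NE_uniq R T E) hx _ => y; apply: sqr_ge0.
Qed.

Lemma detail_sqr_le x n : x \in HE T E -> idx_le T0 T x n ->
  detail T0 T E v x ^+ 2 <= 4 * S.
Proof.
move=> hx hi; rewrite (detail_interp_err hx hi).
have [m [_ _ _ pp]] := HE_parents hE hx hi.
have [n1 n2] := parent_pair_NE hc hT hE hx pp.
have := sqr_sub_half_le (w x) (w (parents T0 T x).1) (w (parents T0 T x).2).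
have := sqr_interp_err_le_sum (HE_NE hx).
have := sqr_interp_err_le_sum n1; have := sqr_interp_err_le_sum n2.
lra.
Qed.

(* Inverting the two-scale relation costs a factor 4 per level of the index. *)
Lemma sqr_interp_err_le n x : x \in NE T E -> idx_le T0 T x n -> w x ^+ 2 <= 4 ^+ n * D.
Proof.
have hD0 : 0 <= D by apply: sumr_ge0 => y _; exact: sqr_ge0.
have h4 k : 0 <= 4 ^+ k * D :> R by rewrite mulr_ge0 // exprn_ge0.
elim: n x => [|n IH] x /NE_vertex_or_HE [hv|hx] hi.
- by rewrite interp_err_vertex // expr0n h4.
- by have [m [] //] := HE_parents hE hx hi.
- by rewrite interp_err_vertex // expr0n h4.
have [m [[<-] i1 i2 pp]] := HE_parents hE hx hi.
have [n1 n2] := parent_pair_NE hc hT hE hx pp.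
have hd : detail T0 T E v x ^+ 2 <= D.
  by apply: ler_term_sum (@HE_uniq R T E) hx _ => y; apply: sqr_ge0.
have h1 := IH _ n1 i1; have h2 := IH _ n2 i2.
have : D <= 4 ^+ n * D by rewrite ler_peMl // exprn_ege1 //; lra.
have := sqr_add_half_le (detail T0 T E v x) (w (parents T0 T x).1) (w (parents T0 T x).2).
have -> : w x = detail T0 T E v x + (w (parents T0 T x).1 + w (parents T0 T x).2) / 2.
  by rewrite (detail_interp_err hx hi); ring.
rewrite [4 ^+ n.+1]exprS; lra.
Qed.

Lemma sum_detail_sqr_le Lambda : admissible Lambda T0 T ->
  D <= 4 * ((2 ^ Lambda).+1 * (2 ^ Lambda).+1)%:R * S.
Proof.
move=> hadm; have hS : 0 <= S by apply: sumr_ge0 => y _; exact: sqr_ge0.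
have hsz : (size (HE T E))%:R <= ((2 ^ Lambda).+1 * (2 ^ Lambda).+1)%:R :> R.
  by rewrite ler_nat (size_HE hc hT hE hadm).
have : D <= (size (HE T E))%:R * (4 * S).
  apply: ler_sum_const => x hx; apply: (detail_sqr_le hx).
  exact: hadm x (NEP _ _ _ (HE_NE hx)).1.
nra.
Qed.

Lemma sum_interp_err_sqr_le Lambda : admissible Lambda T0 T ->
  S <= ((2 ^ Lambda).+1 * (2 ^ Lambda).+1)%:R * 4 ^+ Lambda * D.
Proof.
move=> hadm; have hD0 : 0 <= 4 ^+ Lambda * D.
  by rewrite mulr_ge0 ?exprn_ge0 // sumr_ge0 // => y _; exact: sqr_ge0.
have hsz : (size (HE T E))%:R <= ((2 ^ Lambda).+1 * (2 ^ Lambda).+1)%:R :> R.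
  by rewrite ler_nat (size_HE hc hT hE hadm).
have : S <= (size (HE T E))%:R * (4 ^+ Lambda * D).
  apply: ler_sum_const => x hx; apply: sqr_interp_err_le (HE_NE hx) _.
  exact: hadm x (NEP _ _ _ (HE_NE hx)).1.
nra.
Qed.

End Details.

Unset Implicit Arguments.

Theorem lemma7p1 (R : realType) (Lambda : nat) (T0 : seq (tri R)) (cs Cs : R) :
  conforming T0 -> 0 < cs -> 0 < Cs ->
  exists C : R, 0 < C /\
    forall (T : seq (tri R)) (E : tri R) (VE : (pt2 R -> R) -> Prop),
      refines T0 T -> admissible Lambda T0 T -> E \in T ->
      local_space T E VE -> stable T E VE cs Cs ->
      forall v, VE v ->
      forall r, H1_semi2 E (fun x => v x - interpP1 E v x) r ->
        \sum_(x <- HE T E) detail T0 T E v x ^+ 2 <= C * r /\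
        r <= C * \sum_(x <- HE T E) detail T0 T E v x ^+ 2.
Proof.
move=> hc hcs hCs; set N : R := ((2 ^ Lambda).+1 * (2 ^ Lambda).+1)%:R.
have ha : 0 <= 4 * N by rewrite mulr_ge0.
have hb : 0 <= N * 4 ^+ Lambda by rewrite mulr_ge0 ?exprn_ge0.
exists (4 * N * Cs + N * 4 ^+ Lambda / cs + 1); split.
  by have := mulr_ge0 ha (ltW hCs); have := divr_ge0 hb (ltW hcs); lra.
move=> T E VE hT hadm hE hVE hstab v hv r hr.
have hD := refines_nondegenerate hc hT hE.
have [] := hstab _ (interp_err_local_space hVE hv) (fun z => @interp_err_vertex R E v z hD) r hr.
rewrite (@sum_NE_interp_err R T0 T E v hc hT hE) => st1 st2.
apply: two_sided_bound st1 st2 _ _ => //.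
- by apply: sumr_ge0 => x _; apply: sqr_ge0.
- by apply: sumr_ge0 => x _; apply: sqr_ge0.
- exact: sum_detail_sqr_le.
- exact: sum_interp_err_sqr_le.
Qed.
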